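(* Every connected graph that contains no induced subgraph isomorphic to $P_4$ and no induced subgraph isomorphic to $2K_2$ is detour covered.
   Context: All graphs are finite and simple. $P_4$ is the path on $4$ vertices and $2K_2$ is the graph consisting of two vertex-disjoint edges. A detour of a graph is a longest path in it; a graph is detour covered if every vertex lies in some detour. *)

From mathcomp Require Import all_boot.
Set Implicit Arguments. Unset Strict Implicit. Unset Printing Implicit Defensive.

Definition simple_graph (T : finType) (e : rel T) : Prop :=
  symmetric e /\ irreflexive e.

Definition connected_graph (T : finType) (e : rel T) : Prop :=
  forall x y : T, connect e x y.

(* A path: a nonempty sequence of pairwise distinct vertices, consecutive
   ones adjacent. Its length is measured by number of vertices (same
   maximizers as number of edges). *)
Definition is_path (T : finType) (e : rel T) (p : seq T) : Prop :=
  match p with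
  | [::] => False
  | x :: q => path e x q && uniq p
  end.

Definition is_detour (T : finType) (e : rel T) (p : seq T) : Prop :=
  is_path e p /\ forall q, is_path e q -> size q <= size p.

Definition detour_covered (T : finType) (e : rel T) : Prop :=
  forall v : T, exists p, is_detour e p /\ v \in p.

Definition has_induced_P4 (T : finType) (e : rel T) : Prop :=
  exists a b c d : T, uniq [:: a; b; c; d] /\
    [&& e a b, e b c, e c d, ~~ e a c, ~~ e b d & ~~ e a d].

Definition has_induced_2K2 (T : finType) (e : rel T) : Prop :=
  exists a b c d : T, uniq [:: a; b; c; d] /\
    [&& e a b, e c d, ~~ e a c, ~~ e a d, ~~ e b c & ~~ e b d].

From mathcomp Require Import all_boot.

Set Implicit Arguments. Unset Strict Implicit. Unset Printing Implicit Defensive.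

(* In a graph without induced P4 or 2K2 any two non-adjacent vertices u, w have
   nested neighbourhoods: otherwise some x in N(u) \ N(w) and y in N(w) \ N(u)
   induce either the P4 u-x-y-w or the 2K2 ux, wy.
   Let P be a detour and v a vertex off P.  If N(y) is contained in N(v) for some
   y on P, replacing y by v yields a detour through v.  Otherwise, by nesting,
   N(v) is contained in N(y) for every non-neighbour y of v on P, in particular
   for both ends of P, which cannot be adjacent to v as P cannot be extended.
   Hence a neighbour w of v is adjacent to both ends of P, so w lies inside P,
   say P = x1 ... a w b ... xk.  Moving w to the front gives v w x1 ... a b ... xk,
   one vertex longer than P, so a and b are non-adjacent and their neighbourhoods
   are nested.  If N(b) is contained in N(a), then v w x1 ... a (b's successor)
   ... xk is a detour through v; the other case is the same on the reversal of P. *)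

Definition nested_nbhds (T : finType) (e : rel T) : Prop :=
  forall u w, ~~ e u w -> {subset e u <= e w} \/ {subset e w <= e u}.

Lemma head_rev (T : Type) (x : T) s : head x (rev s) = last x s.
Proof. by case/lastP: s => // s y; rewrite rev_rcons last_rcons. Qed.

Lemma perm_cons_cat (T : eqType) (x : T) s1 s2 :
  perm_eq (x :: s1 ++ s2) (s1 ++ x :: s2).
Proof. by rewrite -cat1s perm_catCA. Qed.

Section SimpleGraph.
Variables (T : finType) (e : rel T).
Hypotheses (e_sym : symmetric e) (e_irr : irreflexive e).

Lemma P4_2K2_free_nested_nbhds :
  ~ has_induced_P4 e -> ~ has_induced_2K2 e -> nested_nbhds e.
Proof.
move=> noP4 no2K2 u w n_uw.
have [/subsetP|/subsetPn [x ux n_wx]] := boolP (e u \subset e w); first by left.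
have [/subsetP|/subsetPn [y wy n_uy]] := boolP (e w \subset e u); first by right.
exfalso; move: ux n_wx wy n_uy; rewrite !unfold_in => ux n_wx wy n_uy.
have neq_ux : u != x by apply: contraTneq ux => <-; rewrite e_irr.
have neq_uy : u != y by apply: contraNneq n_uw => ->; rewrite e_sym.
have neq_uw : u != w by apply: contraTneq ux => ->.
have neq_xy : x != y by apply: contraNneq n_uy => <-.
have neq_xw : x != w by apply: contraNneq n_uw => <-.
have neq_yw : y != w by apply: contraTneq wy => ->; rewrite e_irr.
have [xy|n_xy] := boolP (e x y).
- apply: noP4; exists u, x, y, w; split.
    by rewrite /= !inE !negb_or neq_ux neq_uy neq_uw neq_xy neq_xw neq_yw.
  by rewrite ux xy (e_sym y) wy n_uy (e_sym x) n_wx n_uw.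
- apply: no2K2; exists u, x, w, y; split.
    by rewrite /= !inE !negb_or neq_ux neq_uw neq_uy neq_xw neq_xy eq_sym neq_yw.
  by rewrite ux wy n_uw n_uy (e_sym x) n_wx n_xy.
Qed.

Lemma is_pathP p : reflect (is_path e p) [&& p != [::], sorted e p & uniq p].
Proof. by case: p => [|x p] /=; [right | exact: idP]. Qed.

Lemma sorted_rev p : sorted e (rev p) = sorted e p.
Proof. by rewrite rev_sorted; apply: eq_sorted => x y; exact: e_sym. Qed.

Lemma is_detour_rev p : is_detour e p -> is_detour e (rev p).
Proof.
case=> /is_pathP/and3P[p0 sp up] maxp; split=> [|q /maxp]; last by rewrite size_rev.
by apply/is_pathP; rewrite -nilpE rev_nilp nilpE p0 sorted_rev sp rev_uniq.
Qed.

Lemma size_path_le_card p : is_path e p -> size p <= #|T|.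
Proof. by case/is_pathP/and3P => _ _ /card_uniqP <-; exact: max_card. Qed.

Lemma detour_exists p : is_path e p -> exists q, is_detour e q.
Proof.
move=> pP.
pose has_path n := [exists t : n.-tuple T, [&& tval t != [::], sorted e t & uniq t]].
have has_path_size q : is_path e q -> has_path (size q).
  by move=> /is_pathP qP; apply/existsP; exists (in_tuple q).
have has_path_le n : has_path n -> n <= #|T|.
  by case/existsP=> t /is_pathP /size_path_le_card; rewrite size_tuple.
have ex_path : exists n, has_path n by exists (size p); exact: has_path_size.
case: (ex_maxnP ex_path has_path_le) => n /existsP[t /is_pathP tP] maxn.
exists t; split=> // q /has_path_size.
by rewrite size_tuple; exact: maxn.
Qed.

Lemma detour_eq_size P q :
  is_detour e P -> is_path e q -> size q = size P -> is_detour e q.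
Proof. by case=> _ maxP qP sq; split=> // r; rewrite sq; exact: maxP. Qed.

Lemma detour_head_nonadj P x y : is_detour e P -> x \notin P -> ~~ e x (head y P).
Proof.
case: P => [|z P] [// Pp maxP] xNP /=; apply/negP => xz.
suff /maxP : is_path e [:: x, z & P] by rewrite ltnn.
by case/andP: Pp => zP uP; rewrite /= xz zP xNP.
Qed.

Lemma detour_last_nonadj P x y : is_detour e P -> x \notin P -> ~~ e (last y P) x.
Proof.
move=> /is_detour_rev dP xNP.
by rewrite e_sym -head_rev detour_head_nonadj // mem_rev.
Qed.

Lemma path_nbhd_sub x y s : {subset e x <= e y} -> path e x s -> path e y s.
Proof. by move=> sub_xy; case: s => //= z s /andP[/sub_xy yz ->]; rewrite andbT. Qed.

Lemma sorted_replace L R x y : {subset e x <= e y} ->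
  sorted e (L ++ x :: R) -> sorted e (L ++ y :: R).
Proof.
move=> sub_xy; rewrite !sorted_cat_cons -!(sorted_rev (rcons L _)) !rev_rcons /=.
by case/andP=> /(path_nbhd_sub sub_xy) -> /(path_nbhd_sub sub_xy).
Qed.

Lemma detour_replace L R y v : is_detour e (L ++ y :: R) ->
  v \notin L ++ y :: R -> {subset e y <= e v} -> is_detour e (L ++ v :: R).
Proof.
move=> dP vNP sub_yv; apply: (detour_eq_size dP); last by rewrite !size_cat.
case: dP => /is_pathP/and3P[_ sP uP] _; apply/is_pathP/and3P; split.
- by case: (L).
- exact: sorted_replace sP.
- move: uP vNP; rewrite -[y :: R]cat1s -[v :: R]cat1s !(uniq_catCA L).
  by rewrite /= !mem_cat !inE !negb_or => /andP[_ ->] /and3P[-> _ ->].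
Qed.

Lemma detour_reroute L a w b R v :
  is_detour e (L ++ [:: a, w, b & R]) -> v \notin L ++ [:: a, w, b & R] ->
  e v w -> e w (head a L) ->
  ~~ e a b /\ ({subset e b <= e a} -> is_detour e [:: v, w & L ++ a :: R]).
Proof.
move=> dP vNP vw w_hd; have [/is_pathP/and3P[_ sP uP] maxP] := dP.
move: sP; rewrite sorted_cat_cons /= => /and4P[sLa _ _ bR].
have path_w X : path e w (L ++ a :: X) = sorted e (L ++ a :: X).
  by case: (L) w_hd => [|x L'] /= ->.
have perm_Q : perm_eq [:: v, w & L ++ [:: a, b & R]] (v :: L ++ [:: a, w, b & R]).
  by rewrite perm_cons -!(cat_rcons a L) perm_cons_cat.
have uQ : uniq [:: v, w & L ++ [:: a, b & R]].
  by rewrite (perm_uniq perm_Q) /= vNP.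
split=> [|sub_ba].
  apply/negP => ab; suff /maxP : is_path e [:: v, w & L ++ [:: a, b & R]].
    by rewrite (perm_size perm_Q) ltnn.
  by rewrite /= vw path_w sorted_cat_cons sLa /= ab bR.
apply: (detour_eq_size dP); last by rewrite /= !size_cat /= !addnS.
apply/is_pathP/and3P; split=> //.
  by rewrite /= vw path_w sorted_cat_cons sLa (path_nbhd_sub sub_ba bR).
apply: subseq_uniq uQ; rewrite -!cat_cons; apply: cat_subseq (subseq_refl _) _.
by rewrite -cat1s -[[:: a, b & R]]cat1s cat_subseq ?subseq_cons.
Qed.

Lemma detour_through_inner_nbr L a w b R v : nested_nbhds e ->
  is_detour e (L ++ [:: a, w, b & R]) -> v \notin L ++ [:: a, w, b & R] ->
  e v w -> e w (head a L) -> e w (last b R) ->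
  exists q, is_detour e q /\ v \in q.
Proof.
move=> nested dP vNP vw w_hd w_tl.
have [n_ab sub_ba] := detour_reroute dP vNP vw w_hd.
have revP : rev (L ++ [:: a, w, b & R]) = rev R ++ [:: b, w, a & rev L].
  by rewrite rev_cat !rev_cons !cat_rcons.
have dP' := is_detour_rev dP; rewrite revP in dP'.
have vNP' : v \notin rev R ++ [:: b, w, a & rev L] by rewrite -revP mem_rev.
have w_hd' : e w (head b (rev R)) by rewrite head_rev.
have [_ sub_ab] := detour_reroute dP' vNP' vw w_hd'.
case: (nested a b n_ab) => [/sub_ab | /sub_ba] dQ.
  by exists [:: v, w & rev R ++ b :: rev L]; rewrite mem_head.
by exists [:: v, w & L ++ a :: R]; rewrite mem_head.
Qed.

Lemma detour_through_nbr P v w : nested_nbhds e ->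
  is_detour e P -> v \notin P -> e v w -> e w (head v P) -> e w (last v P) ->
  exists q, is_detour e q /\ v \in q.
Proof.
move=> nested dP vNP vw w_hd w_tl.
have wP : w \in P by apply: contraTT w_hd => wNP; exact: detour_head_nonadj dP wNP.
case/splitPr: wP dP vNP w_hd w_tl => L R.
case/lastP: L => [|L a]; first by rewrite /= e_irr.
case: R => [|b R]; first by rewrite last_cat /= e_irr.
rewrite cat_rcons => dP vNP w_hd w_tl.
apply: detour_through_inner_nbr nested dP vNP vw _ _; last by rewrite last_cat in w_tl.
by case: (L) w_hd.
Qed.

Lemma connected_exists_nbr x y : connected_graph e -> x != y -> exists w, e x w.
Proof.
move=> conn; case/connectP: (conn x y) => [[|w s]] /=; first by move=> _ ->; rewrite eqxx.
by case/andP=> xw _ _ _; exists w.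
Qed.

Lemma nested_nbhds_detour_covered :
  connected_graph e -> nested_nbhds e -> detour_covered e.
Proof.
move=> conn nested v.
have [P dP] := detour_exists (p := [:: v]) isT.
have [vP | vNP] := boolP (v \in P); first by exists P.
have [/hasP[y yP /subsetP sub_yv] | /hasPn not_sub] :=
  boolP (has (fun y => e y \subset e v) P).
  case/splitPr: yP dP vNP sub_yv => L R dP vNP sub_yv.
  exists (L ++ v :: R); split; first exact: detour_replace dP vNP sub_yv.
  by rewrite mem_cat mem_head orbT.
have sub_v y : y \in P -> ~~ e v y -> {subset e v <= e y}.
  by move=> yP /nested[// | sub_yv]; have /negP[] := not_sub y yP; exact/subsetP.
have P0 : P != [::] by case: dP => /is_pathP/and3P[].
have head_P : head v P \in P.
  by case: P P0 {dP vNP not_sub sub_v} => // x P _; exact: mem_head.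
have last_P : last v P \in P.
  by case: P P0 {dP vNP not_sub sub_v head_P} => // x P _ /=; exact: mem_last.
have [w vw] : exists w, e v w.
  by apply: (connected_exists_nbr (y := head v P) conn); apply: contraNneq vNP => ->.
apply: (detour_through_nbr nested dP vNP vw); rewrite e_sym.
  exact: sub_v _ head_P (detour_head_nonadj _ dP vNP) _ vw.
by apply: sub_v _ last_P _ _ vw; rewrite e_sym (detour_last_nonadj _ dP vNP).
Qed.

End SimpleGraph.

Theorem theorem10 (T : finType) (e : rel T) :
  simple_graph e -> connected_graph e ->
  ~ has_induced_P4 e -> ~ has_induced_2K2 e ->
  detour_covered e.
Proof.
move=> [e_sym e_irr] conn noP4 no2K2.
exact: nested_nbhds_detour_covered (P4_2K2_free_nested_nbhds e_sym e_irr noP4 no2K2).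
Qed.
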